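(* Let $\langle Y,\tau\rangle$ be a Hausdorff space with a Sorgenfrey base. Then there exists a continuous open surjection $f:\langle{}^\omega\omega,\sigma_{\mathbb S}\rangle\to\langle Y,\tau\rangle$. Moreover, if $\langle Y,\tau\rangle$ has a Sorgenfrey base that is locally strict and has strict branches, then $\langle Y,\tau\rangle$ is homeomorphic to $\langle{}^\omega\omega,\sigma_{\mathbb S}\rangle$.
   Context: Notation: ${}^{<\omega}\omega$, ${}^\omega\omega$ finite/infinite sequences of naturals; $a^\frown k$ extends $a$ by $k$; $a\triangleleft b$ iff there is $n$ in both domains with $a\upharpoonright n=b\upharpoonright n$ and $a(n)<b(n)$. $\sigma_{\mathbb S}$ is the topology on ${}^\omega\omega$ with base $\{B(p,m):p\in{}^\omega\omega,m\in\omega\}$, $B(p,m)=\{p\}\cup\{r: r\upharpoonright m=p\upharpoonright m,\ p\triangleleft r\}$. A Souslin scheme on $X$ is a family $\mathbf V=\langle V_a\rangle_{a\in{}^{<\omega}\omega}$ of subsets of $X$; $\mathrm{fruit}(\mathbf V,p)=\bigcap_nV_{p\upharpoonright n}$; covering: $V_{\langle\rangle}=X$ and $V_a=\bigcup_nV_{a^\frown n}$; complete: all fruits nonempty; open: all $V_a$ open; has strict branches: every fruit is a singleton; locally strict: $V_a=\bigcup_nV_{a^\frown n}$ and $V_{a^\frown m}\cap V_{a^\frown k}=\emptyset$ for all $a$ and $m\ne k$. $\mathrm{branches}(\mathbf V,x)=\{q: x\in\mathrm{fruit}(\mathbf V,q)\}$; $\mathrm{rsequences}(q,n)=\{p:q\triangleleft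 p,\ q\upharpoonright n=p\upharpoonright n\}$; $\mathrm{cut}(\mathbf V,q,n)=\bigcup\{\mathrm{fruit}(\mathbf V,p):p\in\mathrm{rsequences}(q,n)\}$. A branch $q$ of $x$ is a $\tau$-base branch of $x$ if $\{\mathrm{cut}(\mathbf V,q,m)\cup\{x\}:m\in\omega\}$ is an open neighborhood base at $x$; $\mathrm{BB}(\mathbf V,x,\tau)$ is the set of these. A Sorgenfrey base for a Hausdorff $\langle X,\tau\rangle$ is an open complete covering Souslin scheme with (S1) for all $x$, $q\in\mathrm{branches}(\mathbf V,x)$, $n$, some $t\in\mathrm{BB}(\mathbf V,x,\tau)$ has $t\upharpoonright n=q\upharpoonright n$; (S2) every $q\in{}^\omega\omega$ lies in $\mathrm{BB}(\mathbf V,z,\tau)$ for some $z$. *)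

From HB Require Import structures.
From mathcomp Require Import all_boot all_order.
From mathcomp Require Import all_classical all_reals all_analysis.
Set Implicit Arguments. Unset Strict Implicit. Unset Printing Implicit Defensive.
Local Open Scope classical_set_scope.

(* ${}^\omega\omega$ = nat -> nat ; ${}^{<\omega}\omega$ = seq nat *)

Definition restr (p : nat -> nat) (n : nat) : seq nat := mkseq p n.

Definition tri (a b : nat -> nat) : Prop :=
  exists n, (forall i, (i < n)%N -> a i = b i) /\ (a n < b n)%N.

Definition Bset (p : nat -> nat) (m : nat) : set (nat -> nat) :=
  [set p] `|` [set r | (forall i, (i < m)%N -> r i = p i) /\ tri p r].

Definition baireS : Type := nat -> nat.
HB.instance Definition _ := Choice.on baireS.
HB.instance Definition _ := isPointed.Build ((nat -> nat) * nat)%type (fun _ => 0%N, 0%N).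
HB.instance Definition _ := @isSubBaseTopological.Build baireS
  ((nat -> nat) * nat)%type setT (fun pm => Bset pm.1 pm.2).

Section Souslin.
Context {X : topologicalType}.
Implicit Types (V : seq nat -> set X) (p q : nat -> nat) (x : X).

Definition fruit V p : set X := \bigcap_n V (restr p n).

Definition covering V : Prop :=
  V [::] = setT /\ forall a, V a = \bigcup_n V (rcons a n).

Definition complete V : Prop := forall p, fruit V p !=set0.

Definition open_scheme V : Prop := forall a, open (V a).

Definition strict_branches V : Prop := forall p, exists x, fruit V p = [set x].

Definition locally_strict V : Prop :=
  forall a, V a = \bigcup_n V (rcons a n) /\
    forall m k, m <> k -> V (rcons a m) `&` V (rcons a k) = set0.

Definition branches V x : set (nat -> nat) := [set q | fruit V q x].

Definition rsequences q n : set (nat -> nat) :=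
  [set p | tri q p /\ forall i, (i < n)%N -> q i = p i].

Definition cut V q n : set X := \bigcup_(p in rsequences q n) fruit V p.

(* q is a tau-base branch of x *)
Definition BB V x : set (nat -> nat) :=
  [set q | branches V x q /\
    (forall m, open (cut V q m `|` [set x])) /\
    (forall U, nbhs x U -> exists m, cut V q m `|` [set x] `<=` U)].

Definition sorgenfrey_base V : Prop :=
  open_scheme V /\ complete V /\ covering V /\
  (forall x q n, branches V x q ->
     exists t, BB V x t /\ forall i, (i < n)%N -> t i = q i) /\
  (forall q, exists z, BB V z q).
End Souslin.

Definition open_map {S T : topologicalType} (f : S -> T) : Prop :=
  forall A : set S, open A -> open (f @` A).

Definition homeomorphic (S T : topologicalType) : Prop :=
  exists (f : S -> T) (g : T -> S),
    cancel f g /\ cancel g f /\ continuous f /\ continuous g.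

(* Let V be a Sorgenfrey base of a Hausdorff space Y.  By (S2) every
   sequence q is a base branch of some point, and by the Hausdorff property
   this point is unique (the cuts of q are nonempty and shrink, so two such
   points cannot be separated); call it f q.  Then:
   - f is continuous: f maps the basic set B(q,m) into the m-th cut of q
     together with f q, and these sets form a neighbourhood base at f q;
   - f is open: an open set contains some B(q,M), and every point of the
     M-th cut of q is f t for a base branch t obtained by (S1) which still
     lies in B(q,M);
   - f is onto: every point lies on a branch (covering) and (S1) turns it
     into a base branch.
   If moreover V is locally strict, every point lies on at most one branch,
   so f is injective; a continuous open bijection is a homeomorphism.
   (Strictness of the branches is not needed for this.) *)
From Pilot Require Import Defs.
From HB Require Import structures.
From mathcomp Require Import all_boot all_order.
From mathcomp Require Import all_classical all_reals all_analysis.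
Set Implicit Arguments. Unset Strict Implicit.
Local Open Scope classical_set_scope.

Lemma open_baireSE (A : set baireS) : open A <->
  exists2 D : set (set baireS),
    D `<=` finI_from setT (fun pm : (nat -> nat) * nat => Bset pm.1 pm.2)
    & \bigcup_(i in D) i = A.
Proof. by []. Qed.

Lemma Bset_open q m : open (Bset q m : set baireS).
Proof.
apply/open_baireSE; exists [set Bset q m]; last by rewrite bigcup_set1.
move=> _ ->.
exact: (@finI_from1 _ _ _ (fun pm : (nat -> nat) * nat => Bset pm.1 pm.2) (q, m)).
Qed.

Lemma Bset_mono q m M : (m <= M)%N -> Bset q M `<=` Bset q m.
Proof.
move=> le_mM r [->|[agree tri_qr]]; first by left.
by right; split=> // i lt_im; apply: agree; exact: leq_trans lt_im le_mM.
Qed.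

(* Every point of a basic set has a basic neighbourhood inside it; if q
   branches off p at index n, then B(q, n+1) ⊆ B(p, m). *)
Lemma Bset_in p m q : Bset p m q -> exists M, Bset q M `<=` Bset p m.
Proof.
case=> [->|[agree_pq [n [below_n lt_n]]]]; first by exists m.
have le_mn : (m <= n)%N.
  by rewrite leqNgt; apply/negP => /agree_pq e; rewrite e ltnn in lt_n.
exists n.+1 => r [->|[agree_qr [k [below_k lt_k]]]].
  by right; split => //; exists n.
right; split.
  by move=> i lt_im; rewrite agree_qr ?agree_pq // ltnS (leq_trans (ltnW lt_im)).
exists n; split; last by rewrite agree_qr.
by move=> i lt_in; rewrite agree_qr ?below_n // ltnS ltnW.
Qed.

Lemma Bset_in_seq (s : seq ((nat -> nat) * nat)) q :
  (forall j, j \in s -> Bset j.1 j.2 q) ->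
  exists M, forall j, j \in s -> Bset q M `<=` Bset j.1 j.2.
Proof.
elim: s => [|j s IH] in_all; first by exists 0%N.
have [M1 sub1] := Bset_in (in_all j (mem_head _ _)).
have [M2 sub2] : exists M, forall j, j \in s -> Bset q M `<=` Bset j.1 j.2.
  by apply: IH => j' j's; apply: in_all; rewrite in_cons j's orbT.
exists (maxn M1 M2) => j'; rewrite in_cons => /orP[/eqP->|j's].
  by apply: subset_trans sub1; apply: Bset_mono; exact: leq_maxl.
by apply: subset_trans (sub2 _ j's); apply: Bset_mono; exact: leq_maxr.
Qed.

Lemma open_Bset (A : set baireS) q : open A -> A q -> exists M, Bset q M `<=` A.
Proof.
move/open_baireSE=> [D sub_D <-] [i Di iq].
have [F _ FE] := sub_D _ Di.
have [M sub_M] : exists M,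
    forall j, j \in finmap.enum_fset F -> Bset q M `<=` Bset j.1 j.2.
  by apply: Bset_in_seq => j jF; rewrite -FE in iq; exact: iq.
by exists M => r Mr; exists i => //; rewrite -FE => j jF; exact: sub_M.
Qed.

Lemma nbhs_Bset q M : nbhs (q : baireS) (Bset q M).
Proof. by apply: open_nbhs_nbhs; split; [exact: Bset_open|left]. Qed.

Lemma continuous_open_bij_homeomorphic (S T : topologicalType) (f : S -> T) :
  continuous f -> open_map f -> injective f -> (forall y, exists x, f x = y) ->
  homeomorphic S T.
Proof.
move=> f_cont f_open f_inj /choice[g fgK].
have gfK : cancel f g by move=> x; apply: f_inj; rewrite fgK.
exists f, g; split; first exact: gfK.
split; first exact: fgK.
split; first exact: f_cont.
apply/continuousP => A oA.
have -> : g @^-1` A = f @` A.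
  apply/seteqP; split=> [y Agy|_ [x Ax <-]]; first by exists (g y); rewrite ?fgK.
  by rewrite /= gfK.
exact: f_open.
Qed.

Definition bump (q : nat -> nat) n : nat -> nat :=
  fun i => if i == n then (q n).+1 else q i.

Lemma bump_rsequences q n : rsequences q n (bump q n).
Proof.
split; last by move=> i lt_in; rewrite /bump (ltn_eqF lt_in).
exists n; split; last by rewrite /bump eqxx.
by move=> i lt_in; rewrite /bump (ltn_eqF lt_in).
Qed.

Section SouslinSchemes.
Variables (Y : topologicalType) (V : seq nat -> set Y).

Lemma cut_mono q m M : (m <= M)%N -> Defs.cut V q M `<=` Defs.cut V q m.
Proof.
move=> le_mM y [p [tri_qp agree] fp]; exists p => //.
by split => // i lt_im; apply: agree; exact: leq_trans lt_im le_mM.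
Qed.

Lemma cut_nonempty q m : complete V -> Defs.cut V q m !=set0.
Proof.
move=> V_complete; have [y fy] := V_complete (bump q m).
by exists y; exists (bump q m) => //; exact: bump_rsequences.
Qed.

Lemma BB_uniq z z' q : hausdorff_space Y -> complete V ->
  BB V z q -> BB V z' q -> z = z'.
Proof.
move=> hY V_complete [_ [_ base_z]] [_ [_ base_z']].
apply: hY => A B nA nB.
have [m cut_A] := base_z _ nA; have [m' cut_B] := base_z' _ nB.
have [y cut_y] := cut_nonempty q (maxn m m') V_complete.
exists y; split.
  by apply: cut_A; left; exact: (cut_mono (leq_maxl m m')).
by apply: cut_B; left; exact: (cut_mono (leq_maxr m m')).
Qed.

(* In a covering scheme every point lies on some branch: descend the tree
   choosing at each node a child containing the point. *)
Lemma covering_branch y : covering V -> exists q, fruit V q y.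
Proof.
move=> [VT Vcov].
have child a : exists k, V a y -> V (rcons a k) y.
  have [Vay|nVay] := pselect (V a y); last by exists 0%N.
  by move: Vay; rewrite Vcov => -[k _ Vk]; exists k.
have [g hg] := choice child.
pose s := fix s n := if n is n'.+1 then rcons (s n') (g (s n')) else [::].
have Vs n : V (s n) y by elim: n => [|n IH] /=; [rewrite VT|exact: hg].
have sE n : s n = restr (fun i => g (s i)) n.
  by elim: n => [//|n IH]; rewrite /restr mkseqS -/(restr _ n) -IH.
by exists (fun i => g (s i)) => n _; rewrite -sE.
Qed.

(* In a locally strict scheme every point lies on at most one branch: two
   branches through y agree at every level since siblings are disjoint. *)
Lemma locally_strict_branch_uniq y q q' : locally_strict V ->
  fruit V q y -> fruit V q' y -> q = q'.
Proof.
move=> LS fq fq'.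
suff agree n : forall i, (i < n)%N -> q i = q' i.
  by apply: funext => i; exact: (agree i.+1).
elim: n => [//|n IH].
have restrE : restr q n = restr q' n.
  apply: (@eq_from_nth _ 0%N); rewrite ?size_mkseq // => i lt_in.
  by rewrite !nth_mkseq // IH.
have eq_n : q n = q' n.
  have Vq : V (rcons (restr q n) (q n)) y.
    by rewrite /restr -mkseqS; exact: (fq n.+1 I).
  have Vq' : V (rcons (restr q n) (q' n)) y.
    by rewrite restrE /restr -mkseqS; exact: (fq' n.+1 I).
  apply/eqP/negPn/negP => /eqP ne.
  have : (V (rcons (restr q n) (q n)) `&` V (rcons (restr q n) (q' n))) y by [].
  by rewrite ((LS (restr q n)).2 _ _ ne).
by move=> i; rewrite ltnS leq_eqVlt => /orP[/eqP->//|]; exact: IH.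
Qed.

Section BaseMap.
Hypotheses (hY : hausdorff_space Y) (SB : sorgenfrey_base V).
Variable f : baireS -> Y.
Hypothesis f_BB : forall q, BB V (f q) q.

Lemma base_map_continuous : continuous f.
Proof.
apply/continuousP => U oU; rewrite openE => q /= Ufq.
have [_ [_ base]] := f_BB q.
have [m cut_U] := base _ (open_nbhs_nbhs (conj oU Ufq)).
apply: filterS (nbhs_Bset q m) => r [->|[agree tri_qr]]; first by apply: cut_U; right.
apply: cut_U; left; exists r; last by case: (f_BB r).
by split => // i lt_im; rewrite agree.
Qed.

Lemma base_map_open : open_map f.
Proof.
case: SB => _ [V_complete [_ [S1 _]]].
move=> A oA; rewrite openE => _ [q Aq <-].
have [M BA] := open_Bset oA Aq.
have [_ [open_cut _]] := f_BB q.
apply: (@filterS _ _ _ (Defs.cut V q M `|` [set f q])); last first.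
  by apply: open_nbhs_nbhs; split; [exact: open_cut|right].
move=> y [[p [[n [below_n lt_n]] agree_M] fy]|->]; last by exists q.
have le_Mn : (M <= n)%N.
  by rewrite leqNgt; apply/negP => /agree_M e; rewrite e ltnn in lt_n.
have [t [Bt agree_t]] := S1 y p n.+1 fy.
exists t; last exact: BB_uniq hY V_complete (f_BB t) Bt.
apply: BA; right; split.
  by move=> i lt_iM; rewrite agree_t ?agree_M // ltnS (leq_trans (ltnW lt_iM)).
exists n; split; last by rewrite agree_t.
by move=> i lt_in; rewrite agree_t ?below_n // ltnS ltnW.
Qed.

Lemma base_map_surjective y : exists p : baireS, f p = y.
Proof.
case: SB => _ [V_complete [V_cov [S1 _]]].
have [q fq] := covering_branch y V_cov.
have [t [Bt _]] := S1 y q 0%N fq.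
by exists t; exact: BB_uniq hY V_complete (f_BB t) Bt.
Qed.

Lemma base_map_injective : locally_strict V -> injective f.
Proof.
move=> LS p q fpq; apply: (@locally_strict_branch_uniq (f q)) => //.
  by rewrite -fpq; case: (f_BB p).
by case: (f_BB q).
Qed.

End BaseMap.
End SouslinSchemes.

Lemma base_map_exists (Y : topologicalType) (V : seq nat -> set Y) :
  sorgenfrey_base V -> exists f : baireS -> Y, forall q, BB V (f q) q.
Proof. by case=> _ [_ [_ [_ /choice[f f_BB]]]]; exists f. Qed.

Unset Implicit Arguments.

Theorem mainTheorem8 (Y : topologicalType) (hY : hausdorff_space Y) :
  ((exists V : seq nat -> set Y, sorgenfrey_base V) ->
     exists f : baireS -> Y,
       continuous f /\ open_map f /\ (forall y : Y, exists p : baireS, f p = y)) /\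
  ((exists V : seq nat -> set Y,
      sorgenfrey_base V /\ locally_strict V /\ strict_branches V) ->
     homeomorphic baireS Y).
Proof.
split.
  move=> [V SB]; have [f f_BB] := base_map_exists SB.
  exists f; split; first exact: (@base_map_continuous _ _ _ f_BB).
  split; first exact: (@base_map_open _ _ hY SB _ f_BB).
  exact: (@base_map_surjective _ _ hY SB _ f_BB).
move=> [V [SB [LS _]]]; have [f f_BB] := base_map_exists SB.
apply: (continuous_open_bij_homeomorphic (f := f)).
- exact: (@base_map_continuous _ _ _ f_BB).
- exact: (@base_map_open _ _ hY SB _ f_BB).
- exact: (@base_map_injective _ _ _ f_BB LS).
- exact: (@base_map_surjective _ _ hY SB _ f_BB).
Qed.
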